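(* Let $\mathcal{M}=(S,P,E,s_{init},L)$ be a CTMC, let $\varepsilon,\delta,\varepsilon_1,\delta_1,\varepsilon_2,\delta_2\geq 0$, and let $s,s',s''\in S$. (1) The relation $\sim_{\varepsilon,\delta}$ is the largest $(\varepsilon,\delta)$-bisimulation on $\mathcal{M}$, i.e. it is itself an $(\varepsilon,\delta)$-bisimulation and contains every $(\varepsilon,\delta)$-bisimulation on $\mathcal{M}$. (2) If $s\sim_{\varepsilon_1,\delta_1}s'$ and $s'\sim_{\varepsilon_2,\delta_2}s''$, then $s\sim_{\varepsilon_1+\varepsilon_2,\,\delta_1+\delta_2}s''$. (3) $s\sim s'$ if and only if $s\sim_{0,0}s'$.
   Context: A CTMC is a tuple $\mathcal{M}=(S,P,E,s_{init},L)$ with $S$ a finite nonempty set of states, $P\colon S\to\mathrm{Distr}(S)$ a transition probability function (self-loops allowed; write $P(s,s')=P(s)(s')$ and $P(s,A)=\sum_{a\in A}P(s,a)$ for $A\subseteq S$), $E\colon S\to\mathbb{R}_{>0}$ an exit rate function, $s_{init}\in S$ an initial state, and $L\colon S\to 2^{AP}$ a labeling function. For a relation $R\subseteq S\times S$ and $A\subseteq S$ let $R(A)=\{t\in S\mid \exists s\in A: (s,t)\in R\}$. For $\varepsilon,\delta\geq 0$, a reflexive and symmetric relation $R\subseteq S\times S$ is an $(\varepsilon,\delta)$-bisimulation if for all $(s,s')\in R$: (i) $L(s)=L(s')$; (ii) $|\ln E(s)-\ln E(s')|\leq\delta$; (iii) for all $A\subseteq S$, $P(s,A)\leq P(s',R(A))+\varepsilon$.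 States are $(\varepsilon,\delta)$-bisimilar, written $s\sim_{\varepsilon,\delta}s'$, if some $(\varepsilon,\delta)$-bisimulation contains $(s,s')$. A strong bisimulation is an equivalence relation $R$ on $S$ such that for all $(s,s')\in R$: $L(s)=L(s')$, $E(s)=E(s')$, and $P(s,C)=P(s',C)$ for every equivalence class $C$ of $R$; $s\sim s'$ means some strong bisimulation contains $(s,s')$. *)

From HB Require Import structures.
From mathcomp Require Import all_boot all_order all_algebra.
From mathcomp Require Import boolp classical_sets reals exp.
Set Implicit Arguments. Unset Strict Implicit. Unset Printing Implicit Defensive.
Import Order.TTheory GRing.Theory Num.Theory.
Local Open Scope ring_scope.

Record CTMC (R : realType) (AP : Type) := {
  state : finType;
  Ptr : state -> state -> R;
  Ptr_ge0 : forall s t, 0 <= Ptr s t;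
  Ptr_sum1 : forall s, \sum_(t : state) Ptr s t = 1;
  Erate : state -> R;
  Erate_gt0 : forall s, 0 < Erate s;
  s_init : state;
  Lab : state -> set AP
}.

Section Defs.
Variables (R : realType) (AP : Type) (M : CTMC R AP).
Local Notation S := (state M).

Definition PA (s : S) (A : {set S}) : R := \sum_(a in A) @Ptr _ _ M s a.

Definition rel_img (Rl : S -> S -> Prop) (A : {set S}) : {set S} :=
  [set t | `[< exists s, s \in A /\ Rl s t >]].

Definition eps_delta_bisim (eps del : R) (Rl : S -> S -> Prop) : Prop :=
  (forall s, Rl s s) /\ (forall s t, Rl s t -> Rl t s) /\
  forall s s', Rl s s' ->
    [/\ @Lab _ _ M s = @Lab _ _ M s',
        `| ln (@Erate _ _ M s) - ln (@Erate _ _ M s') | <= del &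
        forall A : {set S}, PA s A <= PA s' (rel_img Rl A) + eps].

Definition eps_delta_bisimilar (eps del : R) (s s' : S) : Prop :=
  exists Rl, eps_delta_bisim eps del Rl /\ Rl s s'.

Definition strong_bisim (Rl : S -> S -> Prop) : Prop :=
  [/\ (forall s, Rl s s), (forall s t, Rl s t -> Rl t s),
      (forall s t u, Rl s t -> Rl t u -> Rl s u) &
      forall s s', Rl s s' ->
        [/\ @Lab _ _ M s = @Lab _ _ M s', @Erate _ _ M s = @Erate _ _ M s' &
            (* for every equivalence class C = [x] of Rl *)
            forall x : S, PA s [set y | `[< Rl x y >]] = PA s' [set y | `[< Rl x y >]]]].

Definition strong_bisimilar (s s' : S) : Prop :=
  exists Rl, strong_bisim Rl /\ Rl s s'.
End Defs.

From mathcomp Require Import all_boot all_order all_algebra.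
From mathcomp Require Import boolp classical_sets reals exp.
From mathcomp Require Import zify.
From Stdlib Require Import Relations.Relation_Operators.
Import Order.TTheory GRing.Theory Num.Theory.
Local Open Scope ring_scope.

(* Bisimilarity, the union of all bisimulations, is itself one, because the
   transfer condition only gets weaker when the relation grows.
   For transitivity, the composite of an (e1,d1)- and an (e2,d2)-bisimulation,
   closed under symmetry, is an (e1+e2,d1+d2)-bisimulation: labels and
   log-rates compose by the triangle inequality, and
   P(s,A) <= P(s',R1(A)) + e1 <= P(s'',R2(R1(A))) + e1 + e2.
   A strong bisimulation preserves P(s,B) on every union B of its classes, in
   particular on R(A) >= A, so it is a (0,0)-bisimulation; conversely a
   (0,0)-bisimulation R satisfies P(s,B) <= P(s',B) for every R-closed B, with
   equality by symmetry, so the equivalence closure of R is a strong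
   bisimulation. *)

Section Bisimulation.
Variables (R : realType) (AP : Type) (M : CTMC R AP).
Local Notation S := (state M).
Local Notation Lab := (@Lab _ _ M).
Local Notation Erate := (@Erate _ _ M).

Lemma le_PA (s : S) (A B : {set S}) : A \subset B -> PA s A <= PA s B.
Proof.
move=> sAB; rewrite /PA [X in _ <= X](big_setID A) /= (finset.setIidPr sAB).
by rewrite lerDl sumr_ge0 // => i _; exact: Ptr_ge0.
Qed.

Lemma rel_imgP (Rl : S -> S -> Prop) (A : {set S}) t :
  reflect (exists s, s \in A /\ Rl s t) (t \in rel_img Rl A).
Proof. by rewrite inE; apply: asboolP. Qed.

Lemma rel_img_subset (Rl : S -> S -> Prop) (A B : {set S}) :
  (forall a t, a \in A -> Rl a t -> t \in B) -> rel_img Rl A \subset B.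
Proof. by move=> AB; apply/fintype.subsetP => t /rel_imgP [a [aA at']]; exact: AB at'. Qed.

Lemma subset_rel_img (Rl : S -> S -> Prop) (A : {set S}) :
  (forall s, Rl s s) -> A \subset rel_img Rl A.
Proof. by move=> Rrefl; apply/fintype.subsetP => t tA; apply/rel_imgP; exists t. Qed.

Definition transfer (eps del : R) (Rl : S -> S -> Prop) (s s' : S) : Prop :=
  [/\ Lab s = Lab s', `| ln (Erate s) - ln (Erate s') | <= del &
      forall A : {set S}, PA s A <= PA s' (rel_img Rl A) + eps].

Lemma transfer_weaken {eps1 del1 eps2 del2 : R} {R1 R2 : S -> S -> Prop} {s s'} :
  transfer eps1 del1 R1 s s' ->
  eps1 <= eps2 -> del1 <= del2 -> (forall x y, R1 x y -> R2 x y) ->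
  transfer eps2 del2 R2 s s'.
Proof.
move=> [eqL leE leP] le_eps le_del R12; split=> // [|A]; first exact: le_trans le_del.
apply: le_trans (leP A) (lerD _ le_eps); apply: le_PA.
apply: rel_img_subset => a t aA at'; apply/rel_imgP; exists a; split=> //.
exact: R12.
Qed.

Lemma transfer_comp {eps1 del1 eps2 del2 : R} {R1 R2 Q : S -> S -> Prop} {x y z} :
  transfer eps1 del1 R1 x y -> transfer eps2 del2 R2 y z ->
  (forall a u t, R1 a u -> R2 u t -> Q a t) ->
  transfer (eps1 + eps2) (del1 + del2) Q x z.
Proof.
move=> [eqL1 leE1 leP1] [eqL2 leE2 leP2] R12Q; split.
- by rewrite eqL1 eqL2.
- exact: le_trans (ler_distD (ln (Erate y)) _ _) (lerD leE1 leE2).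
move=> A; apply: le_trans (leP1 A) _; rewrite [eps1 + eps2]addrC addrA lerD2r.
apply: le_trans (leP2 _) _; rewrite lerD2r; apply: le_PA.
apply: rel_img_subset => u t /rel_imgP [a [aA au]] ut.
by apply/rel_imgP; exists a; split=> //; exact: R12Q ut.
Qed.

Lemma eps_delta_bisimP (eps del : R) (Rl : S -> S -> Prop) :
  eps_delta_bisim eps del Rl <->
  [/\ forall s, Rl s s, forall s t, Rl s t -> Rl t s &
      forall s s', Rl s s' -> transfer eps del Rl s s'].
Proof. by split=> [[? [? ?]] | [? ? ?]]. Qed.

Lemma eq_eps_delta_bisim (eps del : R) :
  0 <= eps -> 0 <= del -> eps_delta_bisim eps del (@eq S).
Proof.
move=> eps_ge0 del_ge0; apply/eps_delta_bisimP; split=> // s _ <-.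
split=> // [|A]; first by rewrite subrr normr0.
by rewrite -[PA s A]addr0 lerD // le_PA // subset_rel_img.
Qed.

Lemma eps_delta_bisimilar_bisim (eps del : R) :
  0 <= eps -> 0 <= del -> eps_delta_bisim eps del (@eps_delta_bisimilar _ _ M eps del).
Proof.
move=> eps_ge0 del_ge0; apply/eps_delta_bisimP; split.
- by move=> s; exists eq; split=> //; exact: eq_eps_delta_bisim.
- move=> s t [Rl [Rbisim Rst]]; have /eps_delta_bisimP [_ Rsym _] := Rbisim.
  by exists Rl; split=> //; exact: Rsym.
move=> s s' [Rl [Rbisim Rss']]; have /eps_delta_bisimP [_ _ Rtr] := Rbisim.
apply: transfer_weaken (Rtr _ _ Rss') _ _ _ => // x y Rxy.
by exists Rl.
Qed.

Definition sym_comp (R1 R2 : S -> S -> Prop) (x z : S) : Prop :=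
  (exists y, R1 x y /\ R2 y z) \/ (exists y, R2 x y /\ R1 y z).

Lemma eps_delta_bisim_sym_comp (eps1 del1 eps2 del2 : R) (R1 R2 : S -> S -> Prop) :
  eps_delta_bisim eps1 del1 R1 -> eps_delta_bisim eps2 del2 R2 ->
  eps_delta_bisim (eps1 + eps2) (del1 + del2) (sym_comp R1 R2).
Proof.
move=> /eps_delta_bisimP [R1refl R1sym R1tr] /eps_delta_bisimP [R2refl R2sym R2tr].
apply/eps_delta_bisimP; split.
- by move=> x; left; exists x.
- by move=> x z [[y [? ?]] | [y [? ?]]]; [right | left]; exists y; split;
    [exact: R2sym | exact: R1sym | exact: R1sym | exact: R2sym].
move=> x z [[y [xy yz]] | [y [xy yz]]].
  by apply: transfer_comp (R1tr _ _ xy) (R2tr _ _ yz) _ => a u t au ut; left; exists u.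
have R21Q a u t : R2 a u -> R1 u t -> sym_comp R1 R2 a t by right; exists u.
by apply: transfer_weaken (transfer_comp (R2tr _ _ xy) (R1tr _ _ yz) R21Q) _ _ _;
  rewrite // addrC.
Qed.

Lemma eps_delta_bisimilar_trans (eps1 del1 eps2 del2 : R) (s s' s'' : S) :
  eps_delta_bisimilar eps1 del1 s s' -> eps_delta_bisimilar eps2 del2 s' s'' ->
  eps_delta_bisimilar (eps1 + eps2) (del1 + del2) s s''.
Proof.
move=> [R1 [R1bisim R1ss']] [R2 [R2bisim R2s's'']].
exists (sym_comp R1 R2); split; first exact: eps_delta_bisim_sym_comp.
by left; exists s'.
Qed.

Definition rel_closed (Rl : S -> S -> Prop) (B : {set S}) : Prop :=
  forall a b, a \in B -> Rl a b -> b \in B.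

Lemma PA_rel_closed_eq {Rl : S -> S -> Prop} {s s' : S} {B : {set S}} :
  (forall x, Rl x x) -> (forall x y, Rl x y -> Rl y x) ->
  (forall x y z, Rl x y -> Rl y z -> Rl x z) ->
  (forall x, PA s [set y | `[< Rl x y >]] = PA s' [set y | `[< Rl x y >]]) ->
  rel_closed Rl B -> PA s B = PA s' B.
Proof.
move=> Rrefl Rsym Rtrans eq_class.
move: {2}#|B| (leqnn #|B|) => n; elim: n B => [|n IH] B.
  by rewrite leqn0 => /eqP/cards0_eq -> _; rewrite /PA !big_set0.
move=> B_le closedB; have [-> | [x xB]] := set_0Vmem B; first by rewrite /PA !big_set0.
set C := [set y | `[< Rl x y >]].
have xC : x \in C by rewrite inE; apply/asboolP; exact: Rrefl.
have CB : C \subset B by apply/fintype.subsetP => y; rewrite inE => /asboolP; exact: closedB.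
have splitB t : PA t B = PA t C + PA t (B :\: C).
  by rewrite /PA (big_setID C) /= (finset.setIidPr CB).
rewrite !splitB eq_class IH //.
  have := cardsID C B; rewrite (finset.setIidPr CB).
  have : (0 < #|C|)%N by apply/card_gt0P; exists x.
  lia.
move=> a b; rewrite !inE => /andP [aC aB] ab; rewrite (closedB a b aB ab) andbT.
by apply: contra aC => /asboolP xb; apply/asboolP; exact: Rtrans xb (Rsym _ _ ab).
Qed.

Lemma strong_bisim_eps_delta_bisim (Rl : S -> S -> Prop) :
  strong_bisim Rl -> eps_delta_bisim 0 0 Rl.
Proof.
move=> [Rrefl Rsym Rtrans Rstrong]; apply/eps_delta_bisimP; split=> // x y xy.
have [eqL eqE eqPA] := Rstrong _ _ xy.
split=> // [|A]; first by rewrite eqE subrr normr0.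
have closedA : rel_closed Rl (rel_img Rl A).
  move=> a b /rel_imgP [c [cA ca]] ab; apply/rel_imgP; exists c; split=> //.
  exact: Rtrans ca ab.
by rewrite addr0 -(PA_rel_closed_eq Rrefl Rsym Rtrans eqPA closedA) le_PA // subset_rel_img.
Qed.

Lemma transfer0_rel_closed {del : R} {Rl : S -> S -> Prop} {s s' : S} {B : {set S}} :
  transfer 0 del Rl s s' -> rel_closed Rl B -> PA s B <= PA s' B.
Proof.
move=> [_ _ leP] closedB; apply: le_trans (leP B) _.
by rewrite addr0 le_PA //; apply: rel_img_subset.
Qed.

Lemma Erate_eq_ln_dist0 (s s' : S) :
  `| ln (Erate s) - ln (Erate s') | <= 0 -> Erate s = Erate s'.
Proof.
rewrite normr_le0 subr_eq0 => /eqP eq_ln.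
by apply: ln_inj eq_ln; rewrite posrE Erate_gt0.
Qed.

Lemma clos_rst_eq_fun {T : Type} {Rl : S -> S -> Prop} (f : S -> T) {x y} :
  clos_refl_sym_trans S Rl x y -> (forall a b, Rl a b -> f a = f b) -> f x = f y.
Proof.
by move=> xy Rf; elim: xy => [a b /Rf | a | a b _ -> | a b c _ -> _ ->].
Qed.

Lemma eps_delta_bisim00_clos_strong (Rl : S -> S -> Prop) :
  eps_delta_bisim 0 0 Rl -> strong_bisim (clos_refl_sym_trans S Rl).
Proof.
move=> /eps_delta_bisimP [_ Rsym Rtr].
split; [exact: rst_refl | exact: rst_sym | exact: rst_trans | move=> x y xy; split].
- by apply: (clos_rst_eq_fun Lab xy) => a b /Rtr [].
- by apply: (clos_rst_eq_fun Erate xy) => a b /Rtr [_ /Erate_eq_ln_dist0].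
move=> z; apply: (clos_rst_eq_fun (fun t => PA t _) xy) => a b ab.
have closed_class : rel_closed Rl [set y | `[< clos_refl_sym_trans S Rl z y >]].
  move=> c d; rewrite !inE => zc cd.
  exact: rst_trans _ _ _ _ _ zc (rst_step _ _ _ _ cd).
apply/le_anti/andP; split.
- exact: (transfer0_rel_closed (Rtr a b ab) closed_class).
- exact: (transfer0_rel_closed (Rtr b a (Rsym _ _ ab)) closed_class).
Qed.

Lemma strong_bisimilar_eps_delta_bisimilar00 (s s' : S) :
  strong_bisimilar s s' <-> eps_delta_bisimilar 0 0 s s'.
Proof.
split=> [[Rl [Rstrong Rss']] | [Rl [Rbisim Rss']]].
  by exists Rl; split=> //; exact: strong_bisim_eps_delta_bisim.
exists (clos_refl_sym_trans S Rl); split; last exact: rst_step.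
exact: eps_delta_bisim00_clos_strong.
Qed.

End Bisimulation.

Theorem theorem2 (R : realType) (AP : Type) (M : CTMC R AP)
    (eps del eps1 del1 eps2 del2 : R) :
  0 <= eps -> 0 <= del -> 0 <= eps1 -> 0 <= del1 -> 0 <= eps2 -> 0 <= del2 ->
  (* (1) *)
  (@eps_delta_bisim _ _ M eps del (@eps_delta_bisimilar _ _ M eps del) /\
   forall Rl : state M -> state M -> Prop, @eps_delta_bisim _ _ M eps del Rl ->
     forall s s', Rl s s' -> @eps_delta_bisimilar _ _ M eps del s s') /\
  (* (2) *)
  (forall s s' s'' : state M,
     @eps_delta_bisimilar _ _ M eps1 del1 s s' -> @eps_delta_bisimilar _ _ M eps2 del2 s' s'' ->
     @eps_delta_bisimilar _ _ M (eps1 + eps2) (del1 + del2) s s'') /\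
  (* (3) *)
  (forall s s' : state M, @strong_bisimilar _ _ M s s' <-> @eps_delta_bisimilar _ _ M 0 0 s s').
Proof.
move=> eps_ge0 del_ge0 _ _ _ _; split; [split | split].
- exact: eps_delta_bisimilar_bisim.
- by move=> Rl Rbisim s s' Rss'; exists Rl.
- exact: eps_delta_bisimilar_trans.
- exact: strong_bisimilar_eps_delta_bisimilar00.
Qed.
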